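(* Let $G$ be a context-free grammar over $B$ with axiom $S$, reduced to the nonterminals that are productive and reachable from $S$. Then $G$ is well-formed if and only if $G$ is bounded well-formed and the word $r_S$ associated with the axiom is $\varepsilon$.
   Context: Let $A$ be a finite alphabet of opening brackets, $\bar A=\{\bar a\mid a\in A\}$ a disjoint copy of closing brackets, $B=A\cup\bar A$. The reduction $\alpha a\bar a\beta\to\alpha\beta$ ($a\in A$; $\bar a a$ does not cancel) gives each $\alpha\in B^*$ a unique normal form $\rho(\alpha)$. A word $\alpha$ is well-formed if $\rho(\alpha)\in A^*$ and weakly well-formed if $\rho(\alpha)\in\bar A^*A^*$; a language is (weakly) well-formed if all its words are; a grammar $G$ is well-formed if $L(G)$ is, and weakly well-formed if $L(G)$ is. For $\alpha\in B^*$, $\mathrm{hd}(\alpha)=|\alpha|_A-|\alpha|_{\bar A}$. For a nonterminal $X$, $L_X$ is the language generated from $X$ and $d_X=\sup\{-\mathrm{hd}(\alpha')\mid \alpha'\alpha''\in L_X\}$. $G$ is bounded well-formed if it is weakly well-formed and for every nonterminal $X$ there is a (shortest) word $r_X\in A^*$ with $|r_X|=d_X$ such that $r_XL_X$ is well-formed. *)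

From mathcomp Require Import all_boot all_order all_algebra.
From Stdlib Require Import Relations.
Set Implicit Arguments. Unset Strict Implicit. Unset Printing Implicit Defensive.
Import GRing.Theory Num.Theory.

Section Brackets.
Variable A : finType.

(* B = A ∪ Ā : inl a is the opening bracket a, inr a the closing bracket ā *)
Definition sym := (A + A)%type.
Definition opn (a : A) : sym := inl a.
Definition cls (a : A) : sym := inr a.
Definition is_open (s : sym) : bool := if s is inl _ then true else false.

Definition red1 (u v : seq sym) : Prop :=
  exists x y a, u = x ++ [:: opn a; cls a] ++ y /\ v = x ++ y.
Definition irreducible (u : seq sym) : Prop := forall v, ~ red1 u v.
Definition normal_form (u r : seq sym) : Prop :=
  clos_refl_trans _ red1 u r /\ irreducible r.

Definition in_Astar (w : seq sym) : bool := all is_open w.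
Definition in_AbarStar_Astar (w : seq sym) : Prop :=
  exists k, all (predC is_open) (take k w) && all is_open (drop k w).

Definition well_formed_word (w : seq sym) : Prop :=
  exists r, normal_form w r /\ in_Astar r.
Definition weakly_well_formed_word (w : seq sym) : Prop :=
  exists r, normal_form w r /\ in_AbarStar_Astar r.

Definition hd (w : seq sym) : int :=
  ((count is_open w)%:Z - (count (predC is_open) w)%:Z)%R.

Section Grammar.
Variable N : finType.

Record grammar := Grammar { rules : seq (N * seq (N + sym)) }.

Variable G : grammar.

Definition step (u v : seq (N + sym)) : Prop :=
  exists x y X rhs, (X, rhs) \in rules G /\
    u = x ++ inl X :: y /\ v = x ++ rhs ++ y.
Definition derives := clos_refl_trans _ step.

Definition lang (X : N) (w : seq sym) : Prop := derives [:: inl X] (map inr w).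

Definition productive (X : N) : Prop := exists w, lang X w.
Definition reachable (S X : N) : Prop :=
  exists x y, derives [:: inl S] (x ++ inl X :: y).

Definition wf_grammar (S : N) : Prop := forall w, lang S w -> well_formed_word w.
Definition weakly_wf_grammar (S : N) : Prop :=
  forall w, lang S w -> weakly_well_formed_word w.

(* d_X = n  (the sup is a finite natural number n) *)
Definition d_is (X : N) (n : nat) : Prop :=
  (exists u v, lang X (u ++ v) /\ (- hd u = n%:Z)%R) /\
  (forall u v, lang X (u ++ v) -> (- hd u <= n%:Z)%R).

Definition r_word (X : N) (r : seq A) : Prop :=
  (exists n, d_is X n /\ size r = n) /\
  (forall w, lang X w -> well_formed_word (map opn r ++ w)) /\
  (forall r' : seq A, (forall w, lang X w -> well_formed_word (map opn r' ++ w)) ->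
     size r <= size r').

Definition bounded_wf (S : N) : Prop :=
  weakly_wf_grammar S /\ forall X, exists r, r_word X r.

End Grammar.
End Brackets.

From mathcomp Require Import all_boot all_order all_algebra zify.
From Stdlib Require Import Relations Classical.
Set Implicit Arguments. Unset Strict Implicit. Unset Printing Implicit Defensive.

(* Normal forms are computed right to left by [rho], which keeps the reduced
   suffix as a stack.  If L_S is well formed, every nonterminal X occurs in a
   sentential form x X y of S, and x, y derive terminal words al, be, so that
   al L_X be is contained in L_S.  Prefixes of well-formed words are well formed,
   hence rho(al) = g lies in A* and g L_X is well formed; in particular every
   prefix u of a word of L_X has -hd(u) <= |g|, so d_X is finite.  The last d_X
   letters r of g already make L_X well formed: no prefix of r w has negative
   height, so rho(r w) does not start with a closing bracket and the remaining
   letters of g cancel nothing.  For X = S the empty word is a candidate, so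
   r_S = [::] by minimality; conversely r_S = [::] says that L_S is well formed. *)

Lemma clos_rt_map (T : Type) (R : relation T) (f : T -> T) :
  (forall x y, R x y -> R (f x) (f y)) ->
  forall x y, clos_refl_trans _ R x y -> clos_refl_trans _ R (f x) (f y).
Proof.
move=> Rf x y; elim=> [u v /Rf | u | u v w _ IHuv _ IHvw].
- exact: rt_step.
- exact: rt_refl.
- exact: rt_trans IHuv IHvw.
Qed.

Lemma ex_maxn_bounded (P : nat -> Prop) m :
  (exists n, P n) -> (forall n, P n -> n <= m) ->
  exists2 n, P n & forall k, P k -> k <= n.
Proof.
elim: m => [|m IHm] [n Pn] le_m.
  by exists n => // k /le_m; have := le_m n Pn; lia.
have [Pm1 | notPm1] := classic (P m.+1); first by exists m.+1 => // k /le_m.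
apply: IHm => [|k Pk]; first by exists n.
have := le_m k Pk; rewrite leq_eqVlt ltnS => /orP [/eqP Ek | //].
by case: notPm1; rewrite -Ek.
Qed.

Section NormalForm.
Variable A : finType.
Local Notation word := (seq (sym A)).
Local Notation reduces := (clos_refl_trans _ (@red1 A)).
Implicit Types (u v w z p q : word) (s : sym A) (g : seq A).

Definition push s p : word :=
  if s is inl a then
    if p is inr b :: p' then (if a == b then p' else s :: p) else s :: p
  else s :: p.

Definition rho w : word := foldr push [::] w.

Lemma rho_cat u v : rho (u ++ v) = foldr push (rho v) u.
Proof. exact: foldr_cat. Qed.

Lemma red1_ctx p q u v : red1 u v -> red1 (p ++ u ++ q) (p ++ v ++ q).
Proof. by case=> x [y [a [-> ->]]]; exists (p ++ x), (y ++ q), a; rewrite -!catA. Qed.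

Lemma reduces_ctx p q u v : reduces u v -> reduces (p ++ u ++ q) (p ++ v ++ q).
Proof. exact: (@clos_rt_map _ _ (fun w => p ++ w ++ q) (@red1_ctx p q)). Qed.

Lemma rho_red1 u v : red1 u v -> rho u = rho v.
Proof. by case=> x [y [a [-> ->]]]; rewrite !rho_cat /= eqxx. Qed.

Lemma rho_reduces u v : reduces u v -> rho u = rho v.
Proof. by elim=> [x y /rho_red1 | | x y z _ -> _ ->]. Qed.

Lemma reduces_rho u : reduces u (rho u).
Proof.
elim: u => [|s u IHu]; first exact: rt_refl.
apply: rt_trans (_ : reduces (s :: rho u) _).
  by have := reduces_ctx [:: s] [::] IHu; rewrite !cats0.
case: s => [a|b] /=; last exact: rt_refl.
case: (rho u) => [|[c|c] p]; try exact: rt_refl.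
case: eqP => [<- | _]; last exact: rt_refl.
by apply: rt_step; exists [::], p, a.
Qed.

Lemma rho_catl u v : rho (rho u ++ v) = rho (u ++ v).
Proof. by symmetry; apply/rho_reduces/(reduces_ctx [::] v (reduces_rho u)). Qed.

Lemma irreducible_behead s p : irreducible (s :: p) -> irreducible p.
Proof. by move=> irr_sp v /(red1_ctx [:: s] [::]); rewrite !cats0; apply: irr_sp. Qed.

Lemma irreducible_cons s p : irreducible p ->
  (forall a p', s = inl a -> p = inr a :: p' -> False) -> irreducible (s :: p).
Proof.
move=> irr_p no_redex v [[|s' x] [y [a [/= [E1 E2] _]]]]; first exact: no_redex E1 E2.
by apply: (irr_p (x ++ y)); exists x, y, a.
Qed.

Lemma irreducible_rho u : irreducible (rho u).
Proof.
elim: u => [|s u IHu]; first by move=> v [[|? ?] [y [a []]]].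
rewrite /= /push; case: s => [a|b]; last exact: irreducible_cons.
case: (rho u) IHu => [|[c|c] p] IHu; try exact: irreducible_cons.
case: eqP => [_ | neq_ac]; first exact: irreducible_behead IHu.
by apply: irreducible_cons => // a' p' [] <- [] /esym.
Qed.

Lemma rho_id p : irreducible p -> rho p = p.
Proof.
elim: p => [|s p IHp] //= irr_sp.
rewrite IHp; last exact: irreducible_behead irr_sp.
case: s irr_sp => [a|b] //= irr_sp; case: p {IHp} irr_sp => [|[c|c] p] //= irr_sp.
by case: eqP irr_sp => // <- irr_sp; case: (irr_sp p); exists [::], p, a.
Qed.

Lemma normal_formP u r : normal_form u r <-> r = rho u.
Proof.
split=> [[red_ur irr_r] | ->]; last by split; [apply: reduces_rho | apply: irreducible_rho].
by rewrite (rho_reduces red_ur) rho_id.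
Qed.

Lemma well_formedP u : well_formed_word u <-> in_Astar (rho u).
Proof.
split=> [[r [/normal_formP -> //]] | wf_u].
by exists (rho u); split; first exact/normal_formP.
Qed.

Lemma well_formed_weakly u : well_formed_word u -> weakly_well_formed_word u.
Proof. by case=> r [nf_r Ar]; exists r; split => //; exists 0; rewrite take0 drop0. Qed.

Lemma Astar_opens p : in_Astar p -> exists g, p = map (@opn A) g.
Proof.
elim: p => [|[a|b] p IHp] //=; first by exists [::].
by case/IHp=> g ->; exists (a :: g).
Qed.

Lemma hd_cat u v : hd (u ++ v) = (hd u + hd v)%R.
Proof. by rewrite /hd !count_cat; lia. Qed.

Lemma hd_opens g : (hd (map (@opn A) g) = (size g)%:Z)%R.
Proof. by rewrite /hd; elim: g => //= a g; lia. Qed.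

Lemma hd_reduces u v : reduces u v -> hd u = hd v.
Proof.
elim=> [x y [x1 [y1 [a [-> ->]]]] | | x y z _ -> _ ->] //.
by rewrite /hd !count_cat /=; lia.
Qed.

Lemma hd_ge0 u : well_formed_word u -> (0 <= hd u)%R.
Proof.
move=> /well_formedP /Astar_opens [g E].
by rewrite (hd_reduces (reduces_rho u)) E hd_opens.
Qed.

Lemma foldr_push_first_close z p : irreducible p -> ~~ in_Astar p ->
  exists o b p' q, [/\ in_Astar o, p = o ++ inr b :: p' & foldr push z p = o ++ inr b :: q].
Proof.
elim: p => [|s p IHp] // irr_sp notA.
case: s irr_sp notA => [a|b] irr_sp notA /=; last by exists [::], b, p, (foldr push z p).
have [o [b [p' [q [Ao Ep Ez]]]]] := IHp (irreducible_behead irr_sp) notA.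
rewrite Ez; case: o Ao Ep Ez => [|[c|c] o] //= Ao Ep Ez.
  case: eqP => [Eab | _]; last by exists [:: inl a], b, p', q; rewrite Ep.
  by case: (irr_sp p'); exists [::], p'; exists a; rewrite Ep Eab.
by exists [:: inl a, inl c & o], b, p', q; rewrite Ep.
Qed.

Lemma well_formed_prefix u v : well_formed_word (u ++ v) -> well_formed_word u.
Proof.
rewrite !well_formedP -rho_catl rho_cat; apply: contraTT => notA.
have [o [b [_ [q [_ _ ->]]]]] := foldr_push_first_close (rho v) (irreducible_rho (u := u)) notA.
by rewrite /in_Astar all_cat /= andbF.
Qed.

Lemma find_open_rho k z : (forall i, (- hd (take i z) <= k%:Z)%R) ->
  find (@is_open A) (rho z) <= k.
Proof.
elim: z k => [|s z IHz] k // low_sz.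
case: s low_sz => [a|b] low_sz /=.
  have /IHz : forall i, (- hd (take i z) <= k.+1%:Z)%R.
    by move=> i; have := low_sz i.+1; rewrite /hd /=; lia.
  by case: (rho z) => [|[c|c] p] //=; case: eqP => /=; lia.
have := low_sz 1; rewrite /hd /= take0 /= => k_gt0.
have /IHz : forall i, (- hd (take i z) <= k.-1%:Z)%R.
  by move=> i; have := low_sz i.+1; rewrite /hd /=; lia.
lia.
Qed.

Lemma rho_opens_cat g z : find (@is_open A) (rho z) = 0 ->
  rho (map (@opn A) g ++ z) = map (@opn A) g ++ rho z.
Proof.
move=> open_z; elim: g => //= a g ->.
by case: g => [|c g] //=; case: (rho z) open_z => [|[c|c] p].
Qed.

Lemma well_formed_opens_catK g z : (forall i, (0 <= hd (take i z))%R) ->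
  well_formed_word (map (@opn A) g ++ z) -> well_formed_word z.
Proof.
move=> nneg_z; rewrite !well_formedP rho_opens_cat /in_Astar ?all_cat; first by case/andP.
by apply/eqP; rewrite -leqn0; apply: find_open_rho => i; have := nneg_z i; lia.
Qed.

End NormalForm.

Section PrefixDeficit.
Variables (A : finType) (L : seq (sym A) -> Prop).

Lemma deficit_le_opens g u v :
  (forall w, L w -> well_formed_word (map (@opn A) g ++ w)) -> L (u ++ v) ->
  (- hd u <= (size g)%:Z)%R.
Proof.
move=> wf_gL /wf_gL; rewrite catA => /well_formed_prefix /hd_ge0.
by rewrite hd_cat hd_opens; lia.
Qed.

Lemma opens_left_context al w0 : L w0 ->
  (forall w, L w -> well_formed_word (al ++ w)) ->
  exists g, forall w, L w -> well_formed_word (map (@opn A) g ++ w).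
Proof.
move=> L_w0 wf_alL.
have [g Eg] : exists g, rho al = map (@opn A) g.
  by apply/Astar_opens/well_formedP/well_formed_prefix; exact: wf_alL L_w0.
by exists g => w /wf_alL; rewrite !well_formedP -Eg rho_catl.
Qed.

Lemma opens_suffix_well_formed g n :
  (forall w, L w -> well_formed_word (map (@opn A) g ++ w)) ->
  (forall u v, L (u ++ v) -> (- hd u <= n%:Z)%R) -> n <= size g ->
  forall w, L w -> well_formed_word (map (@opn A) (drop (size g - n) g) ++ w).
Proof.
move=> wf_gL deficit_n n_le_g w L_w.
have size_r : size (drop (size g - n) g) = n by rewrite size_drop; lia.
apply: (@well_formed_opens_catK _ (take (size g - n) g)); last first.
  by rewrite catA -map_cat cat_take_drop; exact: wf_gL.
move=> i; rewrite take_cat size_map size_r.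
case: ifP => [_ | i_ge_n]; first by rewrite -map_take hd_opens.
have := deficit_n (take (i - n) w) (drop (i - n) w).
by rewrite cat_take_drop hd_cat hd_opens size_r => /(_ L_w); lia.
Qed.

End PrefixDeficit.

Section Grammar.
Variables (A N : finType) (G : grammar A N).
Local Notation form := (seq (N + sym A)).
Implicit Types (p q x y : form) (X S : N).

Lemma step_ctx p q x y : step G x y -> step G (p ++ x ++ q) (p ++ y ++ q).
Proof.
case=> x' [y' [X [rhs [X_rhs [-> ->]]]]].
by exists (p ++ x'), (y' ++ q), X, rhs; rewrite -!catA.
Qed.

Lemma derives_ctx p q x y : derives G x y -> derives G (p ++ x ++ q) (p ++ y ++ q).
Proof. exact: (@clos_rt_map _ _ (fun z => p ++ z ++ q) (@step_ctx p q)). Qed.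

Lemma derives_terminal : (forall X, productive G X) ->
  forall x, exists al, derives G x (map inr al).
Proof.
move=> prod_G; elim=> [|[X|s] x [al der_x]]; first by exists [::]; apply: rt_refl.
  have [w L_w] := prod_G X; exists (w ++ al); rewrite map_cat.
  apply: (@rt_trans _ _ _ (map inr w ++ x)); first exact: (derives_ctx [::] x L_w).
  by have := derives_ctx (map inr w) [::] der_x; rewrite !cats0.
by exists (s :: al); have := derives_ctx [:: inr s] [::] der_x; rewrite !cats0.
Qed.

Lemma lang_context S X x y al be w :
  derives G [:: inl S] (x ++ inl X :: y) ->
  derives G x (map inr al) -> derives G y (map inr be) ->
  lang G X w -> lang G S (al ++ w ++ be).
Proof.
move=> der_S der_x der_y L_w; rewrite /lang !map_cat.
apply: rt_trans der_S _; apply: rt_trans (derives_ctx [::] (inl X :: y) der_x) _.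
apply: rt_trans (derives_ctx (map inr al) y L_w) _.
by have := derives_ctx (map inr al ++ map inr w) [::] der_y; rewrite !cats0 -!catA.
Qed.

Lemma r_word_exists X g : productive G X ->
  (forall w, lang G X w -> well_formed_word (map (@opn A) g ++ w)) ->
  exists r, r_word G X r.
Proof.
move=> [w0 L_w0] wf_gL.
pose attained n := exists u v, lang G X (u ++ v) /\ (- hd u = n%:Z)%R.
have [n att_n max_n] : exists2 n, attained n & forall k, attained k -> k <= n.
  apply: (ex_maxn_bounded (m := size g)); first by exists 0, [::], w0.
  by move=> k [u [v [L_uv Eu]]]; have := deficit_le_opens wf_gL L_uv; lia.
have deficit_n u v : lang G X (u ++ v) -> (- hd u <= n%:Z)%R.
  move=> L_uv; case: (boolP (- hd u <= 0)%R) => [|/negP hd_neg]; first lia.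
  have /max_n : attained `|hd u|%N by exists u, v; split => //; lia.
  lia.
have n_le_g : n <= size g.
  by case: att_n => u [v [L_uv Eu]]; have := deficit_le_opens wf_gL L_uv; lia.
exists (drop (size g - n) g); split; [|split].
- by exists n; split; [split | rewrite size_drop; lia].
- exact: opens_suffix_well_formed.
- move=> r' wf_r'L; case: att_n => u [v [L_uv Eu]].
  by have := deficit_le_opens wf_r'L L_uv; rewrite size_drop; lia.
Qed.

Lemma r_word_nil X r : (forall w, lang G X w -> well_formed_word w) ->
  r_word G X r -> r = [::].
Proof. by move=> wf_L [_ [_ /(_ [::] wf_L)]]; case: r. Qed.

End Grammar.

Theorem lemma2 (A N : finType) (G : grammar A N) (S : N)
  (Hreduced : forall X : N, productive G X /\ reachable G S X) :
  wf_grammar G S <-> (bounded_wf G S /\ forall r : seq A, r_word G S r -> r = [::]).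
Proof.
split=> [wf_S | [[_ r_ex] r_S_nil] w L_w]; last first.
  have [r r_S] := r_ex S; have r_nil := r_S_nil _ r_S; subst r.
  exact: r_S.2.1.
split; [split | by move=> r; apply: r_word_nil]; first by move=> w /wf_S /well_formed_weakly.
move=> X; have [[w0 L_w0] [x [y der_S]]] := Hreduced X.
have prod_G Y : productive G Y by case: (Hreduced Y).
have [al der_x] := derives_terminal prod_G x.
have [be der_y] := derives_terminal prod_G y.
have [g wf_gL] : exists g, forall w, lang G X w -> well_formed_word (map (@opn A) g ++ w).
  apply: (opens_left_context (al := al) L_w0) => w L_w.
  apply: (@well_formed_prefix _ _ be).
  rewrite -catA; exact/wf_S/(lang_context der_S der_x der_y).
by apply: r_word_exists wf_gL; exists w0.
Qed.
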